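(* Let $(X,r)$ be a finite non-degenerate solution and let $a,b\in A=A(X,r)$. Let $\{\alpha,\beta,\gamma\}=\{\lambda,\rho,\sigma\}$. If $\alpha_a=\alpha_b$ and $\beta_a=\beta_b$, then $\gamma_a=\gamma_b$. Furthermore, if $\alpha_a=\beta_a=\mathrm{id}$ then $\gamma_a=\mathrm{id}$.
   Context: A set-theoretic solution $(X,r)$ of the Yang--Baxter equation: $X$ non-empty, $r\colon X\times X\to X\times X$ satisfying $(r\times\mathrm{id})(\mathrm{id}\times r)(r\times\mathrm{id})=(\mathrm{id}\times r)(r\times\mathrm{id})(\mathrm{id}\times r)$; write $r(x,y)=(\lambda_x(y),\rho_y(x))$; non-degenerate means $r$ bijective and all $\lambda_x,\rho_y$ bijective. Put $\sigma_y(x)=\lambda_y\rho_{\lambda_x^{-1}(y)}(x)$. Let $M$ be the monoid with presentation $\langle X\mid x\circ y=\lambda_x(y)\circ\rho_y(x)\ (x,y\in X)\rangle$ and $A$ the monoid $\langle X\mid x+y=y+\sigma_y(x)\ (x,y\in X)\rangle$. The following known structure is used: there is a bijection $M\to A$ fixing $X$; identifying $M$ and $A$ through it, the set $A$ carries two monoid operations $\circ$ and $+$ with common identity, and maps $a\mapsto\lambda_a$ (a monoid morphism $(A,\circ)\to\mathrm{Aut}(A,+)$), $a\mapsto\rho_a$ (a monoid anti-morphism $(A,\circ)\to\mathrm{Sym}(A)$) and $a\mapsto\sigma_a$ (a monoid anti-morphism $(A,+)\to\mathrm{Aut}(A,+)$), extending the given maps on $X$, such that for all $a,b,c\in A$: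 $a\circ b=a+\lambda_a(b)$, $a\circ b=\lambda_a(b)\circ\rho_b(a)$, $a+b=b+\sigma_b(a)$, $\sigma_{\lambda_a(b)}\lambda_a=\lambda_a\sigma_b$, $\lambda_a\lambda_b=\lambda_{\lambda_a(b)}\lambda_{\rho_b(a)}$, and $\sigma_b(a)=\lambda_b\rho_{\lambda_a^{-1}(b)}(a)$. All these maps are bijections of $A$ mapping $X$ onto $X$. *)

From Stdlib Require Import Relations.
From mathcomp Require Import all_boot.
Set Implicit Arguments. Unset Strict Implicit. Unset Printing Implicit Defensive.

Section YBE.
Variable X : finType.
Variable r : X * X -> X * X.

Definition lam (x : X) : X -> X := fun y => (r (x, y)).1.
Definition rho (y : X) : X -> X := fun x => (r (x, y)).2.

Definition r12 (t : X * X * X) : X * X * X :=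
  let: (x, y, z) := t in let: (u, v) := r (x, y) in (u, v, z).
Definition r23 (t : X * X * X) : X * X * X :=
  let: (x, y, z) := t in let: (v, w) := r (y, z) in (x, v, w).

Definition is_solution : Prop :=
  forall t, r12 (r23 (r12 t)) = r23 (r12 (r23 t)).

Definition nondegenerate : Prop :=
  [/\ bijective r, (forall x, bijective (lam x)) & (forall y, bijective (rho y))].

(* lambda_x^{-1}(y) (correct whenever lambda_x is bijective) *)
Definition lam_inv (x y : X) : X := odflt y [pick z | lam x z == y].

Definition sigma (y x : X) : X := lam y (rho (lam_inv x y) x).

(* The additive monoid A = < X | x + y = y + sigma_y(x) >:
   elements are represented by words (x1 + ... + xn  ~  [:: x1; ...; xn]),
   equality in A is the congruence Aeq generated by the relations. *)
Definition Astep (u v : seq X) : Prop :=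
  exists p q x y, u = p ++ x :: y :: q /\ v = p ++ y :: sigma y x :: q.
Definition Aeq : relation (seq X) := clos_refl_sym_trans _ Astep.

(* Words of the structure monoid M: x1 o ... o xn ~ [:: x1; ...; xn].
   The bijection pi : M -> A fixing X, pi(x o w) = x + lambda_x(pi w). *)
Fixpoint piMA (w : seq X) : seq X :=
  if w is x :: w' then x :: map (lam x) (piMA w') else [::].
Fixpoint piAM_rec (n : nat) (s : seq X) : seq X :=
  if n is n'.+1 then
    (if s is y :: t then y :: piAM_rec n' (map (lam_inv y) t) else [::])
  else [::].
Definition piAM (s : seq X) : seq X := piAM_rec (size s) s.

Definition lamM (w : seq X) : X -> X := foldr (fun x f => lam x \o f) id w.
Fixpoint sigW (a : seq X) : X -> X :=
  if a is y :: t then sigW t \o sigma y else id.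
Fixpoint rho1 (x : X) (w : seq X) : seq X :=
  if w is a1 :: a' then rho (lamM a' x) a1 :: rho1 x a' else [::].
Fixpoint rhoM (b w : seq X) : seq X :=
  if b is x :: b' then rhoM b' (rho1 x w) else w.

(* The extended maps lambda_a, rho_a, sigma_a : A -> A, for a in A
   (arguments and values are A-words). lambda_a and sigma_a are
   automorphisms of (A,+) mapping X onto X, hence act letterwise. *)
Definition lamA (a : seq X) : seq X -> seq X := map (lamM (piAM a)).
Definition sigA (a : seq X) : seq X -> seq X := map (sigW a).
Definition rhoA (b : seq X) : seq X -> seq X :=
  fun c => piMA (rhoM (piAM b) (piAM c)).

End YBE.

Inductive kind := KLam | KRho | KSig.

Definition mapA (X : finType) (r : X * X -> X * X) (k : kind) (a : seq X)
  : seq X -> seq X :=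
  match k with KLam => lamA r a | KRho => rhoA r a | KSig => sigA r a end.

Definition Aeq_map (X : finType) (r : X * X -> X * X) (f g : seq X -> seq X) : Prop :=
  forall c, Aeq r (f c) (g c).

From Pilot Require Import Defs.
From Stdlib Require Import Relations.
From mathcomp Require Import all_boot.

Set Implicit Arguments. Unset Strict Implicit. Unset Printing Implicit Defensive.

(** Write [T x = lambda_x^{-1}(x)]. The braid relation yields, for every
    word [w] of the structure monoid, the conjugation identity
    [sigma_w o T = lambda_w o T o rho_w] on [X]; for finite [X] the map [T]
    is a bijection, so on [X] any two of [lambda_w], [rho_w], [sigma_w]
    determine the third. On [A] the maps [lambda_a] and [sigma_a] act
    letterwise, and [rho_a] is determined letter by letter by [lambda_a] and
    [sigma_a]; conversely equal maps on [A] are equal on the letters, since a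
    one-letter word is only equivalent to itself. The second assertion is
    the first one with [b] the empty word. *)

Lemma fin_surj_inj (T : finType) (f : T -> T) :
  (forall y, exists x, f x = y) -> injective f.
Proof.
move=> fsurj; have /image_injP f_inj : #|[seq f x | x in T]| == #|T|.
  rewrite eqn_leq (leq_trans (card_size _)) ?size_image //.
  apply/subset_leq_card/subsetP => y _.
  by have [x <-] := fsurj y; apply: image_f.
by move=> x y; apply: f_inj.
Qed.

Section Solution.

Variables (X : finType) (r : X * X -> X * X).
Hypotheses (hsol : is_solution r) (hnd : nondegenerate r).

Local Notation lam := (Defs.lam r).
Local Notation rho := (Defs.rho r).
Local Notation sigma := (Defs.sigma r).
Local Notation lam_inv := (Defs.lam_inv r).
Local Notation lamM := (Defs.lamM r).
Local Notation rho1 := (Defs.rho1 r).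
Local Notation rhoM := (Defs.rhoM r).
Local Notation piMA := (Defs.piMA r).
Local Notation piAM := (Defs.piAM r).
Local Notation sigW := (Defs.sigW r).
Local Notation Aeq := (Defs.Aeq r).
Local Notation Aeq_map := (Defs.Aeq_map r).
Local Notation mapA := (Defs.mapA r).

Lemma r12E x y z : r12 r (x, y, z) = (lam x y, rho y x, z).
Proof. by rewrite /r12 /Defs.lam /Defs.rho; case: (r (x, y)). Qed.

Lemma r23E x y z : r23 r (x, y, z) = (x, lam y z, rho z y).
Proof. by rewrite /r23 /Defs.lam /Defs.rho; case: (r (y, z)). Qed.

Lemma lam_lam x y z : lam x (lam y z) = lam (lam x y) (lam (rho y x) z).
Proof. by have := hsol (x, y, z); rewrite !(r12E, r23E); case. Qed.

Lemma rho_lam_lam x y z :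
  rho (lam (rho y x) z) (lam x y) = lam (rho (lam y z) x) (rho z y).
Proof. by have := hsol (x, y, z); rewrite !(r12E, r23E); case. Qed.

Lemma lam_inj x : injective (lam x).
Proof. by case: hnd => _ hlam _; apply: bij_inj. Qed.

Lemma lamK x y : lam x (lam_inv x y) = y.
Proof.
rewrite /Defs.lam_inv; case: pickP => [z /eqP // | no_preim].
case: hnd => _ hlam _; have [g _ gK] := hlam x.
by have := no_preim (g y); rewrite gK eqxx.
Qed.

Lemma lam_invK x y : lam_inv x (lam x y) = y.
Proof. exact/lam_inj/lamK. Qed.

Definition tmap (x : X) : X := lam_inv x x.

Lemma lam_rho_fixed x t : lam x t = x -> lam (rho t x) =1 lam t.
Proof. by move=> fix_t s; apply: (@lam_inj x); rewrite [RHS]lam_lam fix_t. Qed.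

Lemma lam_tmap_rho y x : lam y (tmap (rho y x)) = sigma y (tmap x).
Proof.
rewrite /Defs.sigma; congr (lam y _).
set t := tmap x; have fix_t : lam x t = x by rewrite lamK.
have := rho_lam_lam x t (lam_inv t y).
rewrite fix_t (lam_rho_fixed fix_t) lamK => rho_yx.
by rewrite /tmap {2}rho_yx lam_invK.
Qed.

Lemma sigma_lam y z u : sigma (lam y z) (lam y u) = lam y (sigma z u).
Proof.
rewrite /Defs.sigma; set v := lam_inv u z.
have uv : lam u v = z by rewrite lamK.
have lam_yz := lam_lam y u v; have rho_lam := rho_lam_lam y u v.
rewrite uv in lam_yz rho_lam.
by rewrite lam_yz lam_invK rho_lam -lam_yz -lam_lam.
Qed.

Lemma lam_lam_fixed u y : rho y u = y -> lam (lam u y) =1 lam u.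
Proof.
move=> fix_u s; have [_ hlam _] := hnd; have [h _ hK] := hlam y.
by rewrite -(hK s) [RHS]lam_lam fix_u.
Qed.

Lemma tmap_surj y : exists x, tmap x = y.
Proof.
have [_ _ hrho] := hnd; have [g _ gK] := hrho y.
have fix_u : rho y (g y) = y by rewrite gK.
by exists (lam (g y) y); rewrite /tmap -{2}(lam_lam_fixed fix_u) lam_invK.
Qed.

Lemma tmap_inj : injective tmap.
Proof. exact/fin_surj_inj/tmap_surj. Qed.

(** [rhoX w], [lamMW v w] and [sigM w] are [rho_w], [lambda_v (w)] and
    [sigma_w] for words [v], [w] of the structure monoid [M]. *)
Fixpoint rhoX (w : seq X) : X -> X :=
  if w is y :: w' then rhoX w' \o rho y else id.

Fixpoint lamMW (v w : seq X) : seq X :=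
  if w is x :: w' then lamM v x :: lamMW (rho1 x v) w' else [::].

Definition sigM (w : seq X) : X -> X := sigW (piMA w).

Lemma lamM_bij w : bijective (lamM w).
Proof.
have [_ hlam _] := hnd.
by elim: w => [|x w IH] /=; [exists id | apply: bij_comp].
Qed.

Lemma rhoX_bij w : bijective (rhoX w).
Proof.
have [_ _ hrho] := hnd.
by elim: w => [|y w IH] /=; [exists id | apply: bij_comp].
Qed.

Lemma sigW_map (f : X -> X) :
  (forall z u, sigma (f z) (f u) = f (sigma z u)) ->
  forall t u, sigW (map f t) (f u) = f (sigW t u).
Proof. by move=> f_sigma; elim=> [|z t IH] u //=; rewrite f_sigma IH. Qed.

Lemma sigma_lamM v z u : sigma (lamM v z) (lamM v u) = lamM v (sigma z u).
Proof. by elim: v => [|y v IH] //=; rewrite sigma_lam IH. Qed.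

Lemma lamM_tmap_rhoX w x : lamM w (tmap (rhoX w x)) = sigM w (tmap x).
Proof.
elim: w x => [|y w IH] x //=.
by rewrite IH /sigM /= -lam_tmap_rho (sigW_map (sigma_lam y)).
Qed.

Lemma sigM_eq w1 w2 :
  lamM w1 =1 lamM w2 -> rhoX w1 =1 rhoX w2 -> sigM w1 =1 sigM w2.
Proof.
move=> eq_lam eq_rho t; have [x <-] := tmap_surj t.
by rewrite -!lamM_tmap_rhoX eq_rho eq_lam.
Qed.

Lemma lamM_eq w1 w2 :
  sigM w1 =1 sigM w2 -> rhoX w1 =1 rhoX w2 -> lamM w1 =1 lamM w2.
Proof.
move=> eq_sig eq_rho t; have [y <-] := tmap_surj t.
have [g _ gK] := rhoX_bij w1.
by rewrite -(gK y) lamM_tmap_rhoX eq_sig eq_rho -lamM_tmap_rhoX -eq_rho.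
Qed.

Lemma rhoX_eq w1 w2 :
  lamM w1 =1 lamM w2 -> sigM w1 =1 sigM w2 -> rhoX w1 =1 rhoX w2.
Proof.
move=> eq_lam eq_sig x; apply/tmap_inj/(bij_inj (lamM_bij w1)).
by rewrite lamM_tmap_rhoX eq_sig -lamM_tmap_rhoX -eq_lam.
Qed.

Lemma lam_lamM_rho1 v x t :
  lam (lamM v x) (lamM (rho1 x v) t) = lamM v (lam x t).
Proof. by elim: v t => [|z v IH] t //=; rewrite -lam_lam IH. Qed.

Lemma lamM_lamMW_rhoM w v t :
  lamM (lamMW v w) (lamM (rhoM w v) t) = lamM v (lamM w t).
Proof. by elim: w v t => [|x w IH] v t //=; rewrite IH lam_lamM_rho1. Qed.

Lemma piMA_lamMW w v : piMA (lamMW v w) = map (lamM v) (piMA w).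
Proof.
elim: w v => [|x w IH] v //=; rewrite IH -!map_comp.
by congr (_ :: _); apply: eq_map => t /=; rewrite lam_lamM_rho1.
Qed.

Lemma rhoM_nil w : rhoM w [::] = [::].
Proof. by elim: w. Qed.

Lemma lamMW_nil w : lamMW [::] w = w.
Proof. by elim: w => //= x w ->. Qed.

Lemma rhoM_cons w z v : rhoM w (z :: v) = rhoX (lamMW v w) z :: rhoM w v.
Proof. by elim: w z v => [|x w IH] z v //=; rewrite IH. Qed.

Lemma rhoM_eq w1 w2 :
  lamM w1 =1 lamM w2 -> sigM w1 =1 sigM w2 -> rhoM w1 =1 rhoM w2.
Proof.
move=> eq_lam eq_sig; elim=> [|z v IH]; first by rewrite !rhoM_nil.
rewrite !rhoM_cons IH; congr (_ :: _); apply: rhoX_eq => t.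
  have [g _ gK] := lamM_bij (rhoM w1 v).
  by rewrite -(gK t) lamM_lamMW_rhoM IH lamM_lamMW_rhoM eq_lam.
have [g _ gK] := lamM_bij v.
rewrite /sigM !piMA_lamMW -(gK t) !(sigW_map (sigma_lamM v)).
by rewrite [sigW _ _]eq_sig.
Qed.

Lemma piMA_piAM s : piMA (piAM s) = s.
Proof.
suff piMA_rec n t : size t <= n -> piMA (piAM_rec r n t) = t by apply: piMA_rec.
elim: n t => [|n IH] [|y t] //= le_t.
rewrite IH ?size_map // -map_comp -[RHS]map_id.
by congr (_ :: _); apply: eq_map => z /=; rewrite lamK.
Qed.

Lemma Aeq_size s t : Aeq s t -> s = t \/ 1 < size s /\ 1 < size t.
Proof.
elim=> {s t} [s t [p [q [x [y [-> ->]]]]] | s | s t _ | s t u _ IHst _ IHtu].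
- by right; rewrite !size_cat /= !addnS.
- by left.
- by case=> [st | []]; [left | right].
- by case: IHst IHtu => [-> | [? ?]] [<- | [? ?]]; [left | right..].
Qed.

Lemma Aeq_letter u v : Aeq [:: u] [:: v] -> u = v.
Proof. by case/Aeq_size => [[] | []]. Qed.

Lemma mapA_nil k : mapA k [::] =1 id.
Proof.
case: k => c /=; first by rewrite /lamA map_id.
  by rewrite /rhoA piMA_piAM.
by rewrite /sigA map_id.
Qed.

Definition agree_on_letters (k : kind) (a b : seq X) : Prop :=
  match k with
  | KLam => lamM (piAM a) =1 lamM (piAM b)
  | KRho => rhoX (piAM a) =1 rhoX (piAM b)
  | KSig => sigM (piAM a) =1 sigM (piAM b)
  end.

Lemma agree_on_letters_mapA k a b :
  Aeq_map (mapA k a) (mapA k b) -> agree_on_letters k a b.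
Proof.
case: k => eq_ab x; have /= := eq_ab [:: x].
- by move/Aeq_letter.
- by rewrite /rhoA /= !rhoM_cons !rhoM_nil !lamMW_nil => /Aeq_letter.
- by rewrite /sigA /sigM !piMA_piAM => /Aeq_letter.
Qed.

Lemma mapA_eq a b :
  agree_on_letters KLam a b -> agree_on_letters KSig a b ->
  forall k, Aeq_map (mapA k a) (mapA k b).
Proof.
move=> /= eq_lam eq_sig [] c /=.
- by rewrite /lamA (eq_map eq_lam); apply: rst_refl.
- by rewrite /rhoA (rhoM_eq eq_lam eq_sig); apply: rst_refl.
- move: eq_sig; rewrite /sigA /sigM !piMA_piAM => /eq_map ->.
  exact: rst_refl.
Qed.

Lemma mapA_eq_of_two (al be : kind) a b :
  al <> be ->
  Aeq_map (mapA al a) (mapA al b) -> Aeq_map (mapA be a) (mapA be b) ->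
  forall k, Aeq_map (mapA k a) (mapA k b).
Proof.
move=> al_be /agree_on_letters_mapA eq_al /agree_on_letters_mapA eq_be.
apply: mapA_eq.
- case: al be al_be eq_al eq_be => [] [] //= _ e1 e2 //;
    by [exact: (lamM_eq e1 e2) | exact: (lamM_eq e2 e1)].
- case: al be al_be eq_al eq_be => [] [] //= _ e1 e2 //;
    by [exact: (sigM_eq e1 e2) | exact: (sigM_eq e2 e1)].
Qed.

End Solution.

Theorem lemma2p1 (X : finType) (r : X * X -> X * X)
  (hX : 0 < #|X|) (hsol : is_solution r) (hnd : nondegenerate r)
  (al be ga : kind) (hdist : [/\ al <> be, be <> ga & al <> ga])
  (a b : seq X) :
  (Aeq_map r (mapA r al a) (mapA r al b) ->
   Aeq_map r (mapA r be a) (mapA r be b) ->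
   Aeq_map r (mapA r ga a) (mapA r ga b)) /\
  (Aeq_map r (mapA r al a) id ->
   Aeq_map r (mapA r be a) id ->
   Aeq_map r (mapA r ga a) id).
Proof.
have [al_be _ _] := hdist; split=> [eq_al eq_be | id_al id_be c].
  exact: (mapA_eq_of_two hsol hnd al_be eq_al eq_be).
rewrite -[X in Aeq r _ X](mapA_nil hnd ga).
by apply: (mapA_eq_of_two hsol hnd al_be (b := [::])) => d; rewrite mapA_nil.
Qed.
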